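(* Let $d\ge1$ and let $\Psi$, $B$, $b$ satisfy the standing assumptions (A1)–(A4) in the context. For $t\ge0$ and $V\in C^2(\mathbb{R}^d)$ define $$\mathcal L_t(V)(x)=-\langle\nabla V(x),B(t,x)\nabla\Psi(x)\rangle+\operatorname{div}\big(B(t,x)\nabla V(x)\big),$$ and let $V_a(x)=\exp(a(1+|x|^2)^{1/2})$. Then for every $a>0$ there exist $\lambda,\rho>0$ such that for all $t\ge0$ and all $x\in\mathbb{R}^d$, $$\mathcal L_t(V_a)(x)\le-\lambda V_a(x)+\rho.$$
   Context: $|\cdot|$ is the Euclidean norm on vectors and the operator norm on matrices; $a\vee b=\max\{a,b\}$; $\operatorname{div}B$ is the row-wise divergence $(\operatorname{div}B)_i=\sum_j\partial_{x_j}B_{ij}$, and $\operatorname{div}$ of a vector field is the usual divergence (taken in $x$). Standing assumptions: (A1) $\Psi\in C^2(\mathbb{R}^d)$, $\nabla\Psi$ $L$-Lipschitz, $\nabla\Psi(0)=0$. (A2) $B:[0,\infty)\times\mathbb{R}^d\to\mathbb{R}^{d\times d}$ symmetric with $\beta_lI\preceq B(t,x)\preceq\beta_uI$, $\beta_l,\beta_u>0$. (A3) $B$ is $C^2$ in $x$ and there are $L,n_B>0$, $\delta\ge1/2$ with, for all $x,y$, $s,t>0$: $|B(t,x)-B(t,y)|\vee|\operatorname{div}B(t,x)-\operatorname{div}B(t,y)|\le L(1+|x|^{n_B}+|y|^{n_B})|x-y|$ and $|B(s,x)-B(t,x)|\vee|\operatorname{div}B(s,x)-\operatorname{div}B(t,x)|\le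 L(1+|x|^{n_B})|s-t|^\delta$. (A4) $b(t,x)=-B(t,x)\nabla\Psi(x)+\operatorname{div}B(t,x)$ satisfies $\lim_{r\to\infty}\sup_{|x|\ge r,t\ge0}\langle\frac{x}{|x|},\frac{b(t,x)}{|b(t,x)|}\rangle<0$ and $\lim_{r\to\infty}\inf_{|x|\ge r,t\ge0}|b(t,x)|=\infty$. *)

From HB Require Import structures.
From mathcomp Require Import all_boot all_order all_algebra.
From mathcomp Require Import all_classical all_reals all_analysis.
Set Implicit Arguments. Unset Strict Implicit. Unset Printing Implicit Defensive.
Import Order.TTheory GRing.Theory Num.Theory.
Import numFieldNormedType.Exports.
Local Open Scope classical_set_scope.
Local Open Scope ring_scope.

Section Defs.
Variables (R : realType) (d : nat).
Implicit Types (x y u v : 'rV[R]_d) (A : 'M[R]_d).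

Definition ebasis (j : 'I_d) : 'rV[R]_d := \row_k (k == j)%:R.

Definition dotv u v : R := \sum_(i < d) u 0 i * v 0 i.
Definition enorm u : R := Num.sqrt (dotv u u).

Definition mxv A v : 'rV[R]_d := \row_i \sum_(j < d) A i j * v 0 j.

Definition opnorm A : R :=
  sup [set enorm (mxv A v) | v in [set v | enorm v <= 1]].

Definition pd (j : 'I_d) (f : 'rV[R]_d -> R) (x : 'rV[R]_d) : R :=
  'D_(ebasis j) f x.

Definition C1 (f : 'rV[R]_d -> R) : Prop :=
  forall j : 'I_d, (forall x, derivable f x (ebasis j)) /\ continuous (pd j f).
Definition C2 (f : 'rV[R]_d -> R) : Prop :=
  C1 f /\ forall j : 'I_d, C1 (pd j f).

Definition grad (f : 'rV[R]_d -> R) (x : 'rV[R]_d) : 'rV[R]_d :=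
  \row_j pd j f x.

Definition divv (F : 'rV[R]_d -> 'rV[R]_d) (x : 'rV[R]_d) : R :=
  \sum_(i < d) pd i (fun y => F y 0 i) x.

Definition divM (M : 'rV[R]_d -> 'M[R]_d) (x : 'rV[R]_d) : 'rV[R]_d :=
  \row_i \sum_(j < d) pd j (fun y => M y i j) x.

Definition drift (Psi : 'rV[R]_d -> R) (B : R -> 'rV[R]_d -> 'M[R]_d)
  (t : R) (x : 'rV[R]_d) : 'rV[R]_d :=
  - mxv (B t x) (grad Psi x) + divM (B t) x.

Definition gen (Psi : 'rV[R]_d -> R) (B : R -> 'rV[R]_d -> 'M[R]_d)
  (t : R) (V : 'rV[R]_d -> R) (x : 'rV[R]_d) : R :=
  - dotv (grad V x) (mxv (B t x) (grad Psi x))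
  + divv (fun y => mxv (B t y) (grad V y)) x.

Definition Va (a : R) (x : 'rV[R]_d) : R :=
  expR (a * Num.sqrt (1 + enorm x ^+ 2)).

Definition A1 (Psi : 'rV[R]_d -> R) (L : R) : Prop :=
  C2 Psi /\
  (forall x y, enorm (grad Psi x - grad Psi y) <= L * enorm (x - y)) /\
  grad Psi 0 = 0.

Definition A2 (B : R -> 'rV[R]_d -> 'M[R]_d) (betal betau : R) : Prop :=
  0 < betal /\ 0 < betau /\
  forall t x, 0 <= t ->
    (B t x)^T = B t x /\
    (forall v, betal * enorm v ^+ 2 <= dotv v (mxv (B t x) v)
               /\ dotv v (mxv (B t x) v) <= betau * enorm v ^+ 2).

Definition A3 (B : R -> 'rV[R]_d -> 'M[R]_d) (L nB delta : R) : Prop :=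
  (forall t, 0 <= t -> forall i j : 'I_d, C2 (fun x => B t x i j)) /\
  0 < L /\ 0 < nB /\ 1 / 2 <= delta /\
  (forall x y s t, 0 < s -> 0 < t ->
     Num.max (opnorm (B t x - B t y)) (enorm (divM (B t) x - divM (B t) y))
       <= L * (1 + enorm x `^ nB + enorm y `^ nB) * enorm (x - y)
   /\ Num.max (opnorm (B s x - B t x)) (enorm (divM (B s) x - divM (B t) x))
       <= L * (1 + enorm x `^ nB) * `|s - t| `^ delta).

Definition angle_sup (b : R -> 'rV[R]_d -> 'rV[R]_d) (r : R) : R :=
  sup [set z | exists t x, 0 <= t /\ r <= enorm x /\
         z = dotv ((enorm x)^-1 *: x) ((enorm (b t x))^-1 *: b t x)].

Definition size_inf (b : R -> 'rV[R]_d -> 'rV[R]_d) (r : R) : R :=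
  inf [set z | exists t x, 0 <= t /\ r <= enorm x /\ z = enorm (b t x)].

Definition A4 (b : R -> 'rV[R]_d -> 'rV[R]_d) : Prop :=
  (exists l : R, angle_sup b r @[r --> +oo] --> l /\ l < 0) /\
  size_inf b r @[r --> +oo] --> +oo.

End Defs.

From HB Require Import structures.
From mathcomp Require Import all_boot all_order all_algebra.
From mathcomp Require Import all_classical all_reals all_analysis.
From mathcomp Require Import ring lra.
Import Order.TTheory GRing.Theory Num.Theory.
Import numFieldNormedType.Exports.
Local Open Scope classical_set_scope.
Local Open Scope ring_scope.
Set Implicit Arguments. Unset Strict Implicit. Unset Printing Implicit Defensive.

(* Write <x> = (1 + |x|^2)^(1/2), so that grad V_a = (a V_a / <x>) x.  Using the
   symmetry of B, a direct computation gives
     L_t V_a = (a V_a / <x>) (<b(t,x), x> + tr B + (a / <x> - <x>^-2) <x, B x>)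
             <= a V_a (<b(t,x), x> / <x> + d beta_u + a beta_u) =: a V_a (<b, x> / <x> + C).
   By (A4) the drift eventually points inwards with unbounded size, so for |x| >= r
   we get <b, x> <= -(C + 1) <x> and hence L_t V_a <= -a V_a.  On the ball |x| <= r
   the quantity <b(t,x), x> is bounded uniformly in t: at t = 0 by continuity of
   div B(0,.) and compactness, and for t > 0 by comparing b(t,x) with b(t,y) at
   y = (r / |x|) x, where <b(t,y), y> <= 0, through the x-Lipschitz bounds of (A3),
   which do not depend on t.  Hence L_t V_a <= -a V_a + a (sup_{|x| <= r} V_a) (M + C + 1). *)

Section DirectionalDerivative.
Variables (R : realType) (V : normedModType R).

Lemma is_derive_lineP (f : V -> R) (x v : V) (df : R) :
  is_derive x v f df <-> is_derive (0 : R) 1 (fun h : R => f (h *: v + x)) df.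
Proof.
have Dline : 'D_v f x = 'D_1 (fun h : R => f (h *: v + x)) 0.
  rewrite /derive; set g1 := fun h => h^-1 *: _; set g2 := fun h => h^-1 *: _.
  suff -> : g1 = g2 by [].
  by apply: funext => h; rewrite /g1 /g2 /= scale0r add0r [_%:A]mulr1 [h + 0]addr0.
split=> -[fx <-]; apply: DeriveDef; rewrite ?Dline //.
- exact: (derivable1P f x v).1.
- exact: (derivable1P f x v).2.
Qed.

Lemma is_derive_comp_real (g : R -> R) (f : V -> R) (x v : V) (dg df : R) :
  is_derive x v f df -> is_derive (f x) 1 g dg -> is_derive x v (g \o f) (dg * df).
Proof.
move=> /is_derive_lineP Df Dg; apply/is_derive_lineP.
by apply: is_derive1_comp; rewrite /= scale0r add0r.
Qed.

Lemma is_derive_inv (f : V -> R) (x v : V) (df : R) :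
  f x != 0 -> is_derive x v f df ->
  is_derive x v (fun y => (f y)^-1) (- (f x) ^- 2 * df).
Proof.
move=> fx0 Df; apply: DeriveDef; first exact: derivableV.
by rewrite deriveV // derive_val.
Qed.

End DirectionalDerivative.

Section Euclidean.
Variables (R : realType) (d : nat).
Local Notation V := 'rV[R]_d.
Implicit Types (u v w x y : V) (A : 'M[R]_d).

Lemma dotvC u v : dotv u v = dotv v u.
Proof. by apply: eq_bigr => i _; rewrite mulrC. Qed.

Lemma dotvDl u v w : dotv (u + v) w = dotv u w + dotv v w.
Proof. by rewrite /dotv -big_split; apply: eq_bigr => i _; rewrite mxE mulrDl. Qed.

Lemma dotvZl (c : R) u w : dotv (c *: u) w = c * dotv u w.
Proof. by rewrite /dotv mulr_sumr; apply: eq_bigr => i _; rewrite mxE mulrA. Qed.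

Lemma dotvNl u w : dotv (- u) w = - dotv u w.
Proof. by rewrite -scaleN1r dotvZl mulN1r. Qed.

Lemma dotvDr u v w : dotv w (u + v) = dotv w u + dotv w v.
Proof. by rewrite dotvC dotvDl !(dotvC w). Qed.

Lemma dotvZr (c : R) u w : dotv w (c *: u) = c * dotv w u.
Proof. by rewrite dotvC dotvZl dotvC. Qed.

Lemma dotvNr u w : dotv w (- u) = - dotv w u.
Proof. by rewrite dotvC dotvNl dotvC. Qed.

Lemma dotv0r u : dotv u 0 = 0.
Proof. by rewrite /dotv big1 // => i _; rewrite mxE mulr0. Qed.

Lemma dotv_ebasisr x (j : 'I_d) : dotv x (ebasis R j) = x 0 j.
Proof.
rewrite /dotv (bigD1 j) //= big1 ?addr0 => [|i /negbTE ij]; rewrite mxE.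
  by rewrite eqxx mulr1.
by rewrite ij mulr0.
Qed.

Lemma dotvv_ge0 u : 0 <= dotv u u.
Proof. by apply: sumr_ge0 => i _; rewrite -expr2 sqr_ge0. Qed.

Lemma sqr_coord_le x (i : 'I_d) : x 0 i ^+ 2 <= dotv x x.
Proof.
rewrite /dotv (bigD1 i) //= -expr2 lerDl.
by apply: sumr_ge0 => j _; rewrite -expr2 sqr_ge0.
Qed.

Lemma dotv_amgm u v : 2 * dotv u v <= dotv u u + dotv v v.
Proof.
have := dotvv_ge0 (u - v).
by rewrite !(dotvDl, dotvDr, dotvNl, dotvNr) (dotvC v u); lra.
Qed.

Lemma enorm_ge0 u : 0 <= enorm u.
Proof. exact: sqrtr_ge0. Qed.

Lemma sqr_enorm u : enorm u ^+ 2 = dotv u u.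
Proof. by rewrite sqr_sqrtr // dotvv_ge0. Qed.

Lemma dotvv_le x r : enorm x <= r -> dotv x x <= r ^+ 2.
Proof. by move=> xr; rewrite -sqr_enorm ler_sqr ?nnegrE ?(le_trans _ xr) ?enorm_ge0. Qed.

Lemma enormZ (c : R) x : enorm (c *: x) = `|c| * enorm x.
Proof. by rewrite /enorm dotvZl dotvZr mulrA -expr2 sqrtrM ?sqr_ge0 // sqrtr_sqr. Qed.

Lemma enorm_eq0 x : enorm x = 0 -> x = 0.
Proof.
move=> x0; apply/rowP => i; rewrite mxE; apply/eqP; rewrite -sqrf_eq0 eq_le sqr_ge0 andbT.
by have := sqr_coord_le x i; rewrite -sqr_enorm x0 expr0n.
Qed.

Lemma dotv_unit x y : 0 < enorm x -> 0 < enorm y ->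
  dotv x y = enorm x * enorm y * dotv ((enorm x)^-1 *: x) ((enorm y)^-1 *: y).
Proof. by move=> x0 y0; rewrite dotvZl dotvZr; field; rewrite !lt0r_neq0. Qed.

Lemma scale_to_sphere x r : 0 < enorm x -> enorm x <= r ->
  enorm ((r / enorm x) *: x) = r /\ enorm (x - (r / enorm x) *: x) <= r.
Proof.
move=> x0 xr; have k1 : 1 <= r / enorm x by rewrite ler_pdivlMr // mul1r.
have kx : r / enorm x * enorm x = r by rewrite divfK ?lt0r_neq0.
have -> : x - (r / enorm x) *: x = (1 - r / enorm x) *: x by rewrite scalerBl scale1r.
rewrite !enormZ ger0_norm ?(le_trans ler01) // ler0_norm ?subr_le0 // opprB mulrBl mul1r kx.
by split => //; have := enorm_ge0 x; lra.
Qed.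

Lemma dotv_unit_le1 u v : dotv ((enorm u)^-1 *: u) ((enorm v)^-1 *: v) <= 1.
Proof.
have unit_sqr w : dotv ((enorm w)^-1 *: w) ((enorm w)^-1 *: w) <= 1.
  rewrite dotvZl dotvZr -sqr_enorm.
  have [->|w0] := eqVneq (enorm w) 0; first by rewrite invr0 !mul0r ler01.
  by rewrite mulrA -expr2 -exprMn mulVf.
have := dotv_amgm ((enorm u)^-1 *: u) ((enorm v)^-1 *: v).
by have := unit_sqr u; have := unit_sqr v; lra.
Qed.

Lemma mxvD A u v : mxv A (u + v) = mxv A u + mxv A v.
Proof. by apply/rowP => i; rewrite !mxE -big_split; apply: eq_bigr => j _; rewrite mxE mulrDr. Qed.

Lemma mxvZ A (c : R) u : mxv A (c *: u) = c *: mxv A u.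
Proof. by apply/rowP => i; rewrite !mxE mulr_sumr; apply: eq_bigr => j _; rewrite mxE mulrCA. Qed.

Lemma mxvE A v (i : 'I_d) : mxv A v 0 i = dotv (row i A) v.
Proof. by rewrite mxE; apply: eq_bigr => j _; rewrite mxE. Qed.

Lemma dotv_mxvC A u v : A^T = A -> dotv u (mxv A v) = dotv v (mxv A u).
Proof.
have dotv_mxvE w z : dotv w (mxv A z) = \sum_i \sum_j w 0 i * A i j * z 0 j.
  by apply: eq_bigr => i _; rewrite mxE mulr_sumr; apply: eq_bigr => j _; rewrite mulrA.
move=> symA; rewrite !dotv_mxvE exchange_big; apply: eq_bigr => i _; apply: eq_bigr => j _.
by rewrite -[in RHS]symA mxE; ring.
Qed.

Section BoundedQuadraticForm.
Variables (A : 'M[R]_d) (beta : R).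
Hypothesis quadA : forall v, 0 <= dotv v (mxv A v) <= beta * dotv v v.

Lemma dotv_mxv_le u w : A^T = A -> `|2 * dotv u (mxv A w)| <= beta * (dotv u u + dotv w w).
Proof.
move=> symA.
have quad_pm (s : R) : s ^+ 2 = 1 -> dotv (u + s *: w) (mxv A (u + s *: w)) =
    dotv u (mxv A u) + s * (2 * dotv u (mxv A w)) + dotv w (mxv A w).
  move=> s2; rewrite mxvD mxvZ !(dotvDl, dotvDr, dotvZl, dotvZr).
  rewrite (dotv_mxvC _ w) // mulrA -expr2 s2; ring.
have := quadA (u + 1 *: w); have := quadA (u + (-1) *: w).
rewrite !quad_pm ?expr1n ?sqrrN ?expr1n //.
have := quadA u; have := quadA w; rewrite ler_norml.
move=> /andP[_ Aw] /andP[_ Au] /andP[Am _] /andP[Ap _]; apply/andP; split; lra.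
Qed.

Lemma mxtrace_le : \tr A <= d%:R * beta.
Proof.
have Aii i : A i i <= beta.
  have /andP[_] := quadA (ebasis R i).
  by rewrite dotvC dotv_ebasisr mxvE !dotv_ebasisr !mxE eqxx mulr1.
by apply: le_trans (ler_sum _ (fun i _ => Aii i)) _; rewrite sumr_const card_ord mulr_natl.
Qed.

End BoundedQuadraticForm.

Lemma continuous_dotvv (F : V -> V) : (forall i, continuous (fun y => F y 0 i)) ->
  continuous (fun y => dotv (F y) (F y)).
Proof.
move=> cF; apply: (continuous_big add_continuous) => i _ y.
exact: continuousM (cF i y) (cF i y).
Qed.

Lemma continuous_enorm_ball_ub (g : V -> R) (r : R) : continuous g ->
  exists M, forall x, enorm x <= r -> g x <= M.
Proof.
move=> cg; set box := [set v : V | forall i, [set` `[- `|r|, `|r|]] (v ord0 i)].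
have box0 : box !=set0 by exists 0 => i; rewrite /= mxE in_itv /= oppr_le0 normr_ge0.
have cbox : compact box.
  by apply: (@rV_compact _ _ (fun _ => [set` `[- `|r|, `|r|]])) => i; exact: segment_compact.
have [c _ gc] := EVT_max_rV box0 cbox (continuous_subspaceT cg).
exists (g c) => x xr; apply: gc; rewrite inE => i /=; rewrite in_itv /=.
have := sqr_coord_le x i; rewrite -sqr_enorm => xi.
have := enorm_ge0 x; have := ler_norm r.
by move=> rr e0; apply/andP; split; nra.
Qed.

End Euclidean.

Section Divergence.
Variables (R : realType) (d : nat).
Local Notation V := 'rV[R]_d.

Lemma is_derive_coord (x v : V) (k : 'I_d) : is_derive x v (fun y : V => y 0 k) (v 0 k).
Proof.
apply/is_derive_lineP; rewrite (_ : (fun h => _) = ( *%R^~ (v 0 k)) + cst (x 0 k)).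
  by apply: is_derive_eq; rewrite scaler0 add0r addr0 [_%:A]mulr1.
by rewrite funeqE => h; rewrite !mxE.
Qed.

Lemma grad_radial (f : V -> R) (c : R) x :
  (forall v, is_derive x v f (c * dotv x v)) -> grad f x = c *: x.
Proof. by move=> Df; apply/rowP => j; rewrite !mxE /pd derive_val dotv_ebasisr. Qed.

Lemma is_derive_mxv_self (M : V -> 'M[R]_d) (x v : V) (i : 'I_d) :
  (forall j, derivable (fun y => M y i j) x v) ->
  is_derive x v (fun y => mxv (M y) y 0 i)
    (mxv (M x) v 0 i + \sum_j x 0 j * 'D_v (fun y => M y i j) x).
Proof.
move=> DM; rewrite (_ : (fun y => _) = \sum_j ((fun y => M y i j) * (fun y => y 0 j))).
  apply: is_derive_eq (is_derive_sum (fun j =>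
    is_deriveM (derivableP (DM j)) (is_derive_coord x v j))) _.
  by rewrite mxE -big_split; apply: eq_bigr.
by apply/funext => y; rewrite mxE fct_sumE.
Qed.

Lemma divv_mxv_self (M : V -> 'M[R]_d) x :
  (forall i j, derivable (fun y => M y i j) x (ebasis R i)) ->
  divv (fun y => mxv (M y) y) x = \tr (M x) + dotv (divM (fun y => (M y)^T) x) x.
Proof.
move=> DM; rewrite /divv.
under eq_bigr => i _ do rewrite /pd (@derive_val _ _ _ _ _ _ _ (is_derive_mxv_self (DM i))).
rewrite big_split /=; congr (_ + _).
  by apply: eq_bigr => i _; rewrite mxvE dotv_ebasisr mxE.
rewrite exchange_big; apply: eq_bigr => j _; rewrite mxE mulr_suml.
apply: eq_bigr => i _; rewrite mulrC /pd.
by have -> : (fun y : V => (M y)^T j i) = (fun y => M y i j) by apply/funext => y; rewrite mxE.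
Qed.

Lemma divvZ (g : V -> R) (F : V -> V) x :
  (forall i, derivable g x (ebasis R i)) ->
  (forall i, derivable (fun y => F y 0 i) x (ebasis R i)) ->
  divv (fun y => g y *: F y) x = g x * divv F x + dotv (grad g x) (F x).
Proof.
move=> Dg DF; rewrite /divv /dotv mulr_sumr -big_split; apply: eq_bigr => i _.
rewrite (_ : (fun y => _) = g * (fun y => F y 0 i)); last by apply/funext => y; rewrite mxE.
by rewrite /pd (deriveM (Dg i) (DF i)); congr (_ + _); rewrite mxE mulrC.
Qed.

Lemma continuous_divM (M : V -> 'M[R]_d) :
  (forall i j, continuous (pd j (fun y => M y i j))) ->
  forall i, continuous (fun y => divM M y 0 i).
Proof.
move=> cM i; rewrite (_ : (fun y => _) = fun y => \sum_j pd j (fun z => M z i j) y).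
  by apply: (continuous_big add_continuous) => j _; exact: cM.
by apply/funext => y; rewrite mxE.
Qed.

End Divergence.

Section LyapunovFunction.
Variables (R : realType) (d : nat).
Local Notation V := 'rV[R]_d.
Implicit Types (x y v : V) (a : R).

Definition jbracket y : R := Num.sqrt (1 + dotv y y).

Lemma sqr_jbracket y : jbracket y ^+ 2 = 1 + dotv y y.
Proof. by rewrite sqr_sqrtr // addr_ge0 // dotvv_ge0. Qed.

Lemma jbracket_ge1 y : 1 <= jbracket y.
Proof. by rewrite -sqrtr1 ler_sqrt ?lerDl ?dotvv_ge0 // addr_ge0 ?dotvv_ge0. Qed.

Lemma jbracket_gt0 y : 0 < jbracket y.
Proof. exact: lt_le_trans ltr01 (jbracket_ge1 y). Qed.

Lemma jbracket_le y : jbracket y <= 1 + enorm y.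
Proof.
have e0 := enorm_ge0 y.
rewrite /jbracket -sqr_enorm -[leRHS]ger0_norm ?addr_ge0 // -sqrtr_sqr ler_sqrt ?sqr_ge0 //.
by rewrite sqrrD; lra.
Qed.

Lemma Va_jbracket a y : Va a y = expR (a * jbracket y).
Proof. by rewrite /Va sqr_enorm. Qed.

Lemma Va_le_ball a r x : 0 <= a -> enorm x <= r ->
  Va a x <= expR (a * Num.sqrt (1 + r ^+ 2)).
Proof.
move=> a0 xr; rewrite ler_expR ler_wpM2l // ler_sqrt ?addr_ge0 ?sqr_ge0 // lerD2l.
by rewrite ler_sqr ?nnegrE ?enorm_ge0 ?(le_trans (enorm_ge0 x)).
Qed.

Lemma is_derive_dotvv x v : is_derive x v (fun y => dotv y y) (2 * dotv x v).
Proof.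
rewrite (_ : (fun y => _) = \sum_i ((fun y : V => y 0 i) * (fun y : V => y 0 i))).
  apply: is_derive_eq (is_derive_sum (fun i =>
    is_deriveM (is_derive_coord x v i) (is_derive_coord x v i))) _.
  by rewrite /dotv mulr_sumr; apply: eq_bigr => i _; rewrite mulr_natl mulr2n.
by apply/funext => y; rewrite fct_sumE.
Qed.

Lemma is_derive_jbracket x v : is_derive x v jbracket (dotv x v / jbracket x).
Proof.
have pos : 0 < 1 + dotv x x by rewrite ltr_wpDr ?dotvv_ge0.
have D := is_derive_comp_real (is_deriveD (is_derive_cst (1 : R) x v) (is_derive_dotvv x v))
  (is_derive1_sqrt pos).
apply: is_derive_eq D _; rewrite add0r -[Num.sqrt _]/(jbracket x).
by field; rewrite gt_eqF ?jbracket_gt0.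
Qed.

Definition Va_slope a y : R := a * Va a y / jbracket y.

Lemma is_derive_Va a x v : is_derive x v (Va a) (Va_slope a x * dotv x v).
Proof.
rewrite (_ : Va a = expR \o (a \*o jbracket)); last by apply/funext => y; rewrite /= Va_jbracket.
have D := is_derive_comp_real (is_deriveZ a (is_derive_jbracket x v))
  (is_derive_expR (a * jbracket x)).
apply: is_derive_eq D _; rewrite /Va_slope /= Va_jbracket -[a *: _]/(a * _).
by field; rewrite gt_eqF ?jbracket_gt0.
Qed.

Lemma is_derive_Va_slope a x v : is_derive x v (Va_slope a)
  (Va_slope a x * (a / jbracket x - jbracket x ^- 2) * dotv x v).
Proof.
have D := is_deriveM (is_deriveZ a (is_derive_Va a x v))
  (is_derive_inv (lt0r_neq0 (jbracket_gt0 x)) (is_derive_jbracket x v)).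
apply: is_derive_eq D _; rewrite /Va_slope /= -![_ *: _]/(_ * _).
by field; rewrite gt_eqF ?jbracket_gt0.
Qed.

Section Generator.
Variables (Psi : V -> R) (B : R -> V -> 'M[R]_d) (t : R) (x : V).
Hypothesis symB : forall y, (B t y)^T = B t y.
Hypothesis DB : forall i j, derivable (fun y => B t y i j) x (ebasis R i).

Lemma gen_Va a : gen Psi B t (Va a) x = Va_slope a x * (dotv (drift Psi B t x) x
  + \tr (B t x) + (a / jbracket x - jbracket x ^- 2) * dotv x (mxv (B t x) x)).
Proof.
have gradVa y : grad (Va a) y = Va_slope a y *: y.
  by apply: grad_radial => v; exact: is_derive_Va.
have BgradVa : (fun y => mxv (B t y) (grad (Va a) y)) = fun y => Va_slope a y *: mxv (B t y) y.
  by apply/funext => y; rewrite gradVa mxvZ.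
have DBx (i : 'I_d) := @ex_derive _ _ _ _ _ _ _ (is_derive_mxv_self (@DB i)).
have Dslope (i : 'I_d) := @ex_derive _ _ _ _ _ _ _ (is_derive_Va_slope a x (ebasis R i)).
rewrite /gen BgradVa (divvZ Dslope DBx) (divv_mxv_self DB).
rewrite (grad_radial (is_derive_Va_slope a x)) gradVa.
have -> : (fun y => (B t y)^T) = B t by apply/funext => y; rewrite symB.
by rewrite /drift !(dotvDl, dotvNl, dotvZl) (dotvC x (mxv _ _)); ring.
Qed.

Lemma gen_Va_le a beta : 0 < a -> 0 <= beta ->
  (forall v, 0 <= dotv v (mxv (B t x) v) <= beta * dotv v v) ->
  gen Psi B t (Va a) x
    <= a * Va a x * (dotv (drift Psi B t x) x / jbracket x + (d%:R * beta + a * beta)).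
Proof.
move=> a0 beta0 quadB; rewrite gen_Va.
have trB := mxtrace_le quadB; have /andP[q0 qx] := quadB x.
have j0 := jbracket_gt0 x; have j1 := jbracket_ge1 x; have jsq := sqr_jbracket x.
have dbeta0 : 0 <= d%:R * beta by rewrite mulr_ge0.
set j := jbracket x in j0 j1 jsq *; set q := dotv x _ in q0 qx *.
have qj : a / j * q <= a * beta * j.
  have -> : a * beta * j = a / j * (beta * j ^+ 2) by field; rewrite lt0r_neq0.
  by rewrite ler_wpM2l ?divr_ge0 ?(ltW a0) ?(ltW j0) // jsq; lra.
have inner : dotv (drift Psi B t x) x + \tr (B t x) + (a / j - j ^- 2) * q
    <= (dotv (drift Psi B t x) x / j + (d%:R * beta + a * beta)) * j.
  have : 0 <= j ^- 2 * q by rewrite mulr_ge0 ?invr_ge0 ?exprn_ge0 ?(ltW j0).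
  by rewrite !mulrDl divfK ?lt0r_neq0 //; nra.
rewrite /Va_slope -mulrA ler_wpM2l ?mulr_ge0 ?(ltW a0) ?Va_jbracket ?expR_ge0 //.
by rewrite ler_pdivrMl // [leRHS]mulrC.
Qed.

End Generator.

End LyapunovFunction.

Section StandingAssumptions.
Variables (R : realType) (d : nat).
Local Notation V := 'rV[R]_d.
Variables (Psi : V -> R) (B : R -> V -> 'M[R]_d) (L betal betau nB delta : R).

Lemma A1_grad_le x : A1 Psi L -> dotv (grad Psi x) (grad Psi x) <= L ^+ 2 * dotv x x.
Proof.
move=> [_ [lip grad0]]; have := lip x 0; rewrite grad0 !subr0 => g_le.
rewrite -!sqr_enorm -exprMn ler_sqr ?nnegrE ?enorm_ge0 //.
exact: le_trans (enorm_ge0 _) g_le.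
Qed.

Lemma A2_sym t : A2 B betal betau -> 0 <= t -> forall y, (B t y)^T = B t y.
Proof. by move=> [_ [_ hB]] t0 y; case: (hB t y t0). Qed.

Lemma A2_quad t x : A2 B betal betau -> 0 <= t ->
  forall v, 0 <= dotv v (mxv (B t x) v) <= betau * dotv v v.
Proof.
move=> [bl0 [_ hB]] t0 v; have [_ /(_ v) [lo hi]] := hB t x t0.
by rewrite -sqr_enorm (le_trans _ lo) ?hi // mulr_ge0 ?sqr_ge0 // ltW.
Qed.

Lemma A3_derivable t x : A3 B L nB delta -> 0 <= t ->
  forall i j, derivable (fun y => B t y i j) x (ebasis R i).
Proof. by move=> [C2B _] t0 i j; have [C1B _] := C2B t t0 i j; case: (C1B i). Qed.

Lemma A3_continuous_pd t : A3 B L nB delta -> 0 <= t ->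
  forall i j, continuous (pd j (fun y => B t y i j)).
Proof. by move=> [C2B _] t0 i j; have [C1B _] := C2B t t0 i j; case: (C1B j). Qed.

Lemma A3_divM_lipschitz t x y r : A3 B L nB delta -> 0 < t ->
  enorm x <= r -> enorm y <= r ->
  enorm (divM (B t) x - divM (B t) y) <= L * (1 + 2 * r `^ nB) * enorm (x - y).
Proof.
move=> [_ [L0 [nB0 [_ lip]]]] t0 xr yr.
have := (lip x y t t t0 t0).1; rewrite ge_max => /andP[_]; move/le_trans; apply.
have pow_le (z : V) : enorm z <= r -> enorm z `^ nB <= r `^ nB.
  move=> zr; apply: ge0_ler_powR => //; first exact: ltW.
  - exact: enorm_ge0.
  - exact: le_trans (enorm_ge0 z) zr.
rewrite ler_wpM2r ?enorm_ge0 // ler_wpM2l ?(ltW L0) //.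
by have := pow_le x xr; have := pow_le y yr; lra.
Qed.

End StandingAssumptions.

Section Confinement.
Variables (R : realType) (d : nat).
Local Notation V := 'rV[R]_d.
Implicit Types (b : R -> V -> V) (x : V).

Lemma angle_sup_ge b r t x : 0 <= t -> r <= enorm x ->
  dotv ((enorm x)^-1 *: x) ((enorm (b t x))^-1 *: b t x) <= angle_sup b r.
Proof.
move=> t0 rx; apply: ub_le_sup; last by exists t, x.
by exists 1 => _ [t' [x' [_ [_ ->]]]]; exact: dotv_unit_le1.
Qed.

Lemma size_inf_le b r t x : 0 <= t -> r <= enorm x -> size_inf b r <= enorm (b t x).
Proof.
move=> t0 rx; apply: ge_inf; last by exists t, x.
by exists 0 => _ [t' [x' [_ [_ ->]]]]; exact: enorm_ge0.
Qed.

Lemma A4_radial_drift b K : A4 b -> 0 < K -> exists2 r, 1 <= r &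
  forall t x, 0 <= t -> r <= enorm x -> dotv (b t x) x <= - K * jbracket x.
Proof.
move=> [[l [angle_l l0]] size_oo] K0.
set c := - l / 2; have c0 : 0 < c by rewrite /c; lra.
(* [c S = 2 K] beats [K <x> <= K (1 + |x|)] once [|x| >= 1]. *)
set S := 2 * K / c; have S0 : 0 < S by rewrite /S divr_gt0 // mulr_gt0.
have /filter_ex[r [angle_r size_r r1]] :
    \forall r \near +oo, [/\ angle_sup b r < - c, S <= size_inf b r & 1 <= r].
  near=> r; split; near: r.
  - by apply: cvgr_lt angle_l _ _; rewrite /c; lra.
  - exact: (cvgryPge _).1 size_oo S.
  - exact: nbhs_pinfty_ge.
exists r => // t x t0 rx.
have angle := angle_sup_ge b t0 rx; have size := size_inf_le b t0 rx.
rewrite dotvC dotv_unit; [|lra|lra].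
set u := dotv _ _ in angle *.
have xb0 : 0 <= enorm x * enorm (b t x) by rewrite mulr_ge0 ?enorm_ge0.
have inward : enorm x * enorm (b t x) * u <= enorm x * enorm (b t x) * - c.
  by rewrite ler_wpM2l //; lra.
have large : enorm x * S <= enorm x * enorm (b t x) by rewrite ler_wpM2l ?enorm_ge0 //; lra.
have cS : c * S = 2 * K by rewrite /S mulrCA divff ?mulr1 ?lt0r_neq0.
have twoK : - c * (enorm x * S) <= - K * (1 + enorm x).
  rewrite mulNr mulrCA cS.
  have : 0 <= K * (enorm x - 1) by apply: mulr_ge0; [exact: ltW | rewrite subr_ge0; lra].
  lra.
have : - K * (1 + enorm x) <= - K * jbracket x.
  by rewrite !mulNr lerN2 ler_wpM2l ?jbracket_le ?(ltW K0).
nra.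
Unshelve. all: end_near.
Qed.

End Confinement.

Section DriftOnBall.
Variables (R : realType) (d : nat).
Local Notation V := 'rV[R]_d.
Variables (Psi : V -> R) (B : R -> V -> 'M[R]_d) (L betal betau nB delta : R).
Hypotheses (hPsi : A1 Psi L) (hB : A2 B betal betau) (hB3 : A3 B L nB delta).
Implicit Types (x y : V).

Lemma B_grad_dotv_le t x y r : 0 <= t -> enorm x <= r -> enorm y <= r ->
  `|2 * dotv (mxv (B t x) (grad Psi x)) y| <= betau * (1 + L ^+ 2) * r ^+ 2.
Proof.
move=> t0 xr yr; have bu0 : 0 < betau by case: hB => _ [].
rewrite dotvC; apply: le_trans (dotv_mxv_le (A2_quad x hB t0) _ _ (A2_sym hB t0 x)) _.
rewrite -mulrA ler_wpM2l ?(ltW bu0) // mulrDl mul1r lerD ?dotvv_le //.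
by apply: le_trans (A1_grad_le x hPsi) _; rewrite ler_wpM2l ?sqr_ge0 ?dotvv_le.
Qed.

Lemma drift0_ball_ub r : exists M, forall x, enorm x <= r -> dotv (drift Psi B 0 x) x <= M.
Proof.
have cdiv : continuous (fun y => dotv (divM (B 0) y) (divM (B 0) y)).
  exact/continuous_dotvv/continuous_divM/(A3_continuous_pd hB3 (lexx 0)).
have [Mdiv div_le] := continuous_enorm_ball_ub r cdiv.
exists (betau * (1 + L ^+ 2) * r ^+ 2 / 2 + (Mdiv + r ^+ 2) / 2) => x xr.
have := B_grad_dotv_le (lexx 0) xr xr; rewrite ler_norml => /andP[BgradPsi _].
have := dotv_amgm (divM (B 0) x) x; have := div_le x xr; have := dotvv_le xr.
by rewrite /drift dotvDl dotvNl; lra.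
Qed.

Lemma drift_dotv_sphere_le t x y r : 0 < t -> enorm x <= r -> enorm y = r ->
  enorm (x - y) <= r -> dotv (drift Psi B t y) y <= 0 ->
  dotv (drift Psi B t x) y
    <= betau * (1 + L ^+ 2) * r ^+ 2 + ((L * (1 + 2 * r `^ nB) * r) ^+ 2 + r ^+ 2) / 2.
Proof.
move=> t0 xr ey exy sphere_y; have yr : enorm y <= r by rewrite ey.
have L0 : 0 < L by case: hB3 => _ [].
set D := divM (B t) x - divM (B t) y.
have DD : dotv D D <= (L * (1 + 2 * r `^ nB) * r) ^+ 2.
  apply: dotvv_le; apply: le_trans (A3_divM_lipschitz hB3 t0 xr yr) _.
  by rewrite ler_wpM2l // mulr_ge0 ?addr_ge0 ?mulr_ge0 ?powR_ge0 ?(ltW L0).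
have split_drift : drift Psi B t x = drift Psi B t y - mxv (B t x) (grad Psi x)
    + mxv (B t y) (grad Psi y) + D.
  by apply/rowP => i; rewrite /drift !mxE; ring.
have yy : dotv y y = r ^+ 2 by rewrite -sqr_enorm ey.
have := B_grad_dotv_le (ltW t0) xr yr; have := B_grad_dotv_le (ltW t0) yr yr.
rewrite !ler_norml => /andP[_ Bgy] /andP[Bgx _].
move: sphere_y (dotv_amgm D y); rewrite split_drift yy; clearbody D.
move: (drift Psi B t y) => b_y; rewrite !dotvDl !dotvNl; lra.
Qed.

Lemma drift_ball_ub r : 0 < r ->
  (forall t x, 0 <= t -> enorm x = r -> dotv (drift Psi B t x) x <= 0) ->
  exists M, forall t x, 0 <= t -> enorm x <= r -> dotv (drift Psi B t x) x <= M.
Proof.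
move=> r0 sphere; have [M0 ub0] := drift0_ball_ub r.
set M1 := betau * (1 + L ^+ 2) * r ^+ 2 + ((L * (1 + 2 * r `^ nB) * r) ^+ 2 + r ^+ 2) / 2.
have M10 : 0 <= M1.
  have bu0 : 0 < betau by case: hB => _ [].
  apply: addr_ge0; first by rewrite !mulr_ge0 ?addr_ge0 ?sqr_ge0 ?ler01 ?(ltW bu0) ?(ltW r0).
  by rewrite divr_ge0 ?addr_ge0 ?sqr_ge0.
exists (Num.max M0 M1) => t x t0 xr; rewrite le_max.
have [->|tn0] := eqVneq t 0; first by rewrite ub0.
have {tn0 t0}t0 : 0 < t by rewrite lt_neqAle eq_sym tn0.
apply/orP; right; have [x0|x0] := eqVneq (enorm x) 0; first by rewrite (enorm_eq0 x0) dotv0r.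
have ex0 : 0 < enorm x by rewrite lt0r x0 enorm_ge0.
have [ey exy] := scale_to_sphere ex0 xr; set k := r / enorm x in ey exy *.
have k1 : 1 <= k by rewrite /k ler_pdivlMr // mul1r.
have := drift_dotv_sphere_le t0 xr ey exy (sphere t _ (ltW t0) ey).
by rewrite -/M1 dotvZr; nra.
Qed.

Lemma drift_jbracket_bounds K : A4 (drift Psi B) -> 0 < K ->
  exists r N, 0 <= N /\ forall t x, 0 <= t ->
    (r <= enorm x -> dotv (drift Psi B t x) x / jbracket x <= - K) /\
    (enorm x <= r -> dotv (drift Psi B t x) x / jbracket x <= N).
Proof.
move=> hb K0; have [r r1 far] := A4_radial_drift hb K0.
have sphere t x : 0 <= t -> enorm x = r -> dotv (drift Psi B t x) x <= 0.
  move=> t0 xr; apply: le_trans (far t x t0 _) _; first by rewrite xr.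
  by rewrite mulNr oppr_le0 mulr_ge0 ?(ltW K0) ?(ltW (jbracket_gt0 x)).
have [M ball] := drift_ball_ub (lt_le_trans ltr01 r1) sphere.
have N0 : 0 <= Num.max M 0 by rewrite le_max lexx orbT.
have MN : M <= Num.max M 0 by rewrite le_max lexx.
exists r, (Num.max M 0); split => // t x t0; have j0 := jbracket_gt0 x.
split => xr; rewrite ler_pdivrMr //; first exact: far.
exact: le_trans (ball t x t0 xr) (le_trans MN (ler_peMr N0 (jbracket_ge1 x))).
Qed.

End DriftOnBall.

Theorem lemma4 (R : realType) (d : nat) (hd : (1 <= d)%N)
  (Psi : 'rV[R]_d -> R) (B : R -> 'rV[R]_d -> 'M[R]_d)
  (L betal betau nB delta : R) :
  A1 Psi L -> A2 B betal betau -> A3 B L nB delta -> A4 (drift Psi B) ->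
  forall a : R, 0 < a ->
  exists lambda rho : R, 0 < lambda /\ 0 < rho /\
    forall (t : R) (x : 'rV[R]_d), 0 <= t ->
      gen Psi B t (Va a) x <= - lambda * Va a x + rho.
Proof.
move=> hPsi hB hB3 hb a a0; have bu0 : 0 < betau by case: hB => _ [].
set C := d%:R * betau + a * betau.
have C1 : 0 < C + 1 by rewrite ltr_pwDr // addr_ge0 ?mulr_ge0 ?(ltW bu0) ?(ltW a0).
have [r [N [N0 ratio]]] := drift_jbracket_bounds hPsi hB hB3 hb C1.
set Vr := expR (a * Num.sqrt (1 + r ^+ 2)).
have rho0 : 0 < a * Vr * (N + C + 1) by rewrite !mulr_gt0 ?expR_gt0 //; lra.
exists a, (a * Vr * (N + C + 1)); do 2 split => //.
move=> t x t0; rewrite mulNr.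
have := gen_Va_le Psi (A2_sym hB t0) (A3_derivable hB3 t0) a0 (ltW bu0) (A2_quad x hB t0).
rewrite -/C; move/le_trans; apply.
have V0 : 0 <= a * Va a x by rewrite mulr_ge0 ?Va_jbracket ?expR_ge0 ?(ltW a0).
have [far ball] := ratio t x t0; have [xr|xr] := leP r (enorm x).
  by have := ler_wpM2l V0 (far xr); lra.
have := ler_wpM2l V0 (ball (ltW xr)).
have : a * Va a x * (N + C + 1) <= a * Vr * (N + C + 1).
  by rewrite ler_wpM2r ?ler_wpM2l ?Va_le_ball ?(ltW a0) ?(ltW xr) //; lra.
lra.
Qed.
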